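(* Let $p>2$ be a prime, $K\in\{\mathbb Z_{(p)},\mathbb Z_p\}$, $F$ a field containing $K$, $G=\langle a\rangle\cong C_{p^2}$, $\Phi(x)=x^{p-1}+\dots+x+1$, and for $1\leq j\leq p-2$ let $U_j$ be the $KC_{p^2}$-submodule of $(KC_{p^2})^{2}$ generated by $\big((a-1)^{j+1}+\Phi(a),\,(a-1)^j\big)$ and $\big((a-1)\Phi(a^p),\,\Phi(a^p)\big)$. Let $f_j:C_{p^2}\to\widehat{U_j}$ be the cocycle with $f_j(a)=p^{-2}\Phi(a)\Phi(a^p)(1,0)+U_j$. Then $\mathrm{Crys}(C_{p^2};U_j;f_j)$ is torsion-free.
   Context: $FM=F\otimes_KM$, $\widehat M=FM/M$ with $g(x+M)=gx+M$; a $1$-cocycle is $T:G\to\widehat M$ with $T(gh)=gT(h)+T(g)$, determined for cyclic $G$ by $T(a)$ via $T(a^k)=(1+a+\dots+a^{k-1})T(a)$. $\mathrm{Crys}(G;M;T)=\{(g,x):g\in G,\ x\in FM,\ x+M=T(g)\}$ with $(g,x)(g',x')=(gg',g'x+x')$. *)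

From HB Require Import structures.
From mathcomp Require Import all_boot all_order all_algebra.
Set Implicit Arguments. Unset Strict Implicit. Unset Printing Implicit Defensive.
Import Order.TTheory GRing.Theory Num.Theory.
Local Open Scope ring_scope.

Definition is_Zloc (F : fieldType) (p : nat) (K : {pred F}) : Prop :=
  forall x : F, x \in K <-> exists q : rat, ~~ (p %| `|denq q|)%N /\ x = ratr q.

Definition pdivK (F : fieldType) (p : nat) (K : {pred F}) (n : nat) (x : F) : Prop :=
  exists2 y : F, y \in K & x = (p%:R ^+ n) * y.

(* K is a copy of the p-adic integers Z_p inside F: a subring with residue
   ring Z/p (p not a unit, every element congruent to an integer mod p) that is
   p-adically separated and complete.  These properties characterise Z_p up
   to isomorphism. *)
Definition is_Zp (F : fieldType) (p : nat) (K : {pred F}) : Prop :=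
  [/\ 1 \in K, (forall x y, x \in K -> y \in K -> x - y \in K),
      (forall x y, x \in K -> y \in K -> x * y \in K) &
      (p%:R)^-1 \notin K] /\
  [/\
      (forall x, x \in K -> exists z : int, pdivK p K 1 (x - z%:~R)),
      (forall x, x \in K -> (forall n, pdivK p K n x) -> x = 0) &
      (forall s : nat -> F, (forall n, s n \in K) ->
         (forall n, pdivK p K n (s n.+1 - s n)) ->
         exists2 l, l \in K & forall n, pdivK p K n (l - s n))].

(* ---------- the group algebra F C_{p^2} = F[X]/(X^{p^2} - 1) ----------
   An element of F C_{p^2} is represented by its reduced polynomial
   (size < p^2), the generator a being X. Pairs represent (FG)^2. *)

Definition modp2 (F : fieldType) (p : nat) : {poly F} := 'X^(p ^ 2) - 1.
Definition red (F : fieldType) (p : nat) (u : {poly F}) : {poly F} := u %% modp2 F p.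
Definition reduced (F : fieldType) (p : nat) (u : {poly F}) : bool :=
  (size u < p ^ 2)%N.

Definition PhiA (F : fieldType) (p : nat) : {poly F} := \sum_(i < p) 'X^i.
Definition PhiAp (F : fieldType) (p : nat) : {poly F} := \sum_(i < p) 'X^(p * i).

Definition gen1 (F : fieldType) (p j : nat) : {poly F} * {poly F} :=
  (('X - 1) ^+ j.+1 + PhiA F p, ('X - 1) ^+ j).
Definition gen2 (F : fieldType) (p : nat) : {poly F} * {poly F} :=
  (('X - 1) * PhiAp F p, PhiAp F p).

(* x lies in the S[G]-submodule of (FG)^2 generated by gen1, gen2, where
   S is K (giving U_j) or all of F (giving F U_j = F (x)_K U_j). *)
Definition in_span (F : fieldType) (p j : nat) (S : {pred F})
    (x : {poly F} * {poly F}) : Prop :=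
  exists c1 c2 : {poly F}, [/\ c1 \is a polyOver S, c2 \is a polyOver S,
    red p x.1 = red p (c1 * (gen1 F p j).1 + c2 * (gen2 F p).1) &
    red p x.2 = red p (c1 * (gen1 F p j).2 + c2 * (gen2 F p).2)].

Definition inU (F : fieldType) (p j : nat) (K : {pred F}) x := in_span p j K x.
Definition inFU (F : fieldType) (p j : nat) x := in_span p j (@predT F) x.

Definition wj (F : fieldType) (p : nat) : {poly F} * {poly F} :=
  ((p%:R ^+ 2)^-1 *: (PhiA F p * PhiAp F p), 0).

(* 1 + a + ... + a^{k-1}, so that f_j(a^k) = N_k f_j(a) *)
Definition Nk (F : fieldType) (k : nat) : {poly F} := \sum_(i < k) 'X^i.

Definition pmul (F : fieldType) (c : {poly F}) (x : {poly F} * {poly F}) :=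
  (c * x.1, c * x.2).

(* Crys(C_{p^2}; U_j; f_j): elements (a^k, x), 0 <= k < p^2, x in F U_j
   (reduced), with x + U_j = f_j(a^k). *)
Definition inCrys (F : fieldType) (p j : nat) (K : {pred F})
    (e : nat * ({poly F} * {poly F})) : Prop :=
  [/\ (e.1 < p ^ 2)%N, reduced p e.2.1, reduced p e.2.2,
      inFU p j e.2 &
      inU p j K (e.2 - pmul (Nk F e.1) (wj F p))].

(* the group law (g,x)(g',x') = (g g', g' x + x') on C_{p^2} x (FG)^2 *)
Definition cmul (F : fieldType) (p : nat) (e e' : nat * ({poly F} * {poly F})) :
    nat * ({poly F} * {poly F}) :=
  (((e.1 + e'.1) %% p ^ 2)%N,
   (red p ('X^(e'.1) * e.2.1 + e'.2.1), red p ('X^(e'.1) * e.2.2 + e'.2.2))).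

Definition cone (F : fieldType) : nat * ({poly F} * {poly F}) := (0%N, (0, 0)).

Definition cpow (F : fieldType) (p : nat) (e : nat * ({poly F} * {poly F})) (n : nat) :=
  iter n (fun y => cmul p y e) (cone F).

Definition crys_torsion_free (F : fieldType) (p j : nat) (K : {pred F}) : Prop :=
  forall e, inCrys p j K e -> forall n : nat, (0 < n)%N -> cpow p e n = cone F ->
    e = cone F.

From HB Require Import structures.
From mathcomp Require Import all_boot all_order all_algebra.
From mathcomp Require Import ring.
Import Order.TTheory GRing.Theory Num.Theory.
Set Implicit Arguments. Unset Strict Implicit. Unset Printing Implicit Defensive.
Local Open Scope ring_scope.

(* Let (a^k, x) be a torsion element of Crys(C_{p^2}; U_j; f_j), with
   x - N_k f_j(a) = c1 g1 + c2 g2 for K-polynomials c1, c2 and the generators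
   g1, g2 of U_j.  If k = 0, then n x = 0 and x = 0.  Otherwise the first
   coordinate of x has augmentation 0, and augmenting the coset equation gives
   c1(1) p = -k; since c1(1) is in K, which contains no m / p with p not
   dividing m, we get k = u p with 0 < u < p.  Modulo a^p - 1 the norm of a^k
   becomes n and Phi(a^p) becomes p, so the second coordinate yields
   (a^p - 1) g = c1 (a - 1)^j + p c2 with g over K.  Substituting a = t + 1
   and using (t + 1)^p - 1 = t^p + p r(t), the coefficient of t^j (j < p)
   reads p (g r)_j = -u + p c2_j, so that u / p lies in K: a contradiction. *)

Definition p_fraction_free (F : fieldType) (p : nat) (K : {pred F}) : Prop :=
  forall m : nat, ~~ (p %| m)%N -> m%:R / p%:R \notin K.

Section CoefficientRing.

Variables (F : fieldType) (p : nat).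
Hypotheses (p_prime : prime p) (F_char0 : [pchar F] =i pred0).

Lemma natrF_eq0 (n : nat) : (n%:R == 0 :> F) = (n == 0)%N.
Proof. exact: (pcharf0P _).1 F_char0 n. Qed.

Lemma intrF_inj : injective (fun z : int => z%:~R : F).
Proof.
have intr_eq0 (z : int) : (z%:~R == 0 :> F) = (z == 0).
  by case: z => n; rewrite ?NegzE ?intrN ?oppr_eq0 -pmulrn natrF_eq0.
by move=> z1 z2 /eqP; rewrite -subr_eq0 -intrB intr_eq0 subr_eq0 => /eqP.
Qed.

Lemma natr_p_neq0 : p%:R != 0 :> F.
Proof. by rewrite natrF_eq0 -lt0n prime_gt0. Qed.

Lemma p_fraction_free_subring (S : subringClosed F) :
  p%:R^-1 \notin S -> p_fraction_free p S.
Proof.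
move=> invpS m pNm; apply: contra invpS => mpS.
have [u [v]] := Bezoutz m p.
have -> : gcdz m p = 1.
  by rewrite /gcdz /= (eqP (_ : coprime m p)) // coprime_sym prime_coprime.
move=> /(congr1 (fun z : int => z%:~R : F)); rewrite intrD !intrM -!pmulrn => Euv.
suff -> : (p%:R : F)^-1 = m%:R / p%:R * u%:~R + v%:~R.
  exact: rpredD (rpredM mpS (rpred_int _ _)) (rpred_int _ _).
apply: (mulfI natr_p_neq0); rewrite divff ?natr_p_neq0 // -[LHS]/(1%:R) -Euv.
by field; apply: natr_p_neq0.
Qed.

Lemma is_Zp_subring (K : {pred F}) : is_Zp p K -> GRing.subring_closed K.
Proof. by move=> [[]]. Qed.

Lemma is_Zp_p_fraction_free (K : {pred F}) : is_Zp p K -> p_fraction_free p K.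
Proof.
move=> Kp; have [[_ _ _ invpK] _] := Kp.
exact: (p_fraction_free_subring
          (S := HB.pack K (GRing.isSubringClosed.Build _ _ (is_Zp_subring Kp))) invpK).
Qed.

Lemma is_ZlocP (K : {pred F}) : is_Zloc p K -> forall x,
  reflect (exists a d : int, ~~ (p %| `|d|)%N /\ x * d%:~R = a%:~R) (x \in K).
Proof.
move=> Kloc x; apply: (iffP idP) => [/(Kloc x).1 [q [pNq ->]] | [a [d [pNd Exd]]]].
  exists (numq q), (denq q); split => //.
  by rewrite /ratr divfK // -[0]/(0%:~R) (inj_eq intrF_inj) denq_neq0.
apply/(Kloc x).2; have d_neq0 : d != 0 by apply: contraNneq pNd => ->.
case: (divqP a d) pNd d_neq0 Exd => // k r k_neq0 pNd _ Exd.
exists r; split; first by apply: contra pNd; rewrite abszM; apply: dvdn_mull.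
have intr_neq0 (z : int) : z != 0 -> (z%:~R : F) != 0.
  by move=> z0; rewrite -[0]/(0%:~R) (inj_eq intrF_inj).
rewrite /ratr; apply: (mulIf (intr_neq0 _ (denq_neq0 r))).
rewrite divfK ?intr_neq0 ?denq_neq0 //.
apply: (mulfI (intr_neq0 _ k_neq0)); rewrite -!intrM -Exd intrM; ring.
Qed.

Lemma is_Zloc_subring (K : {pred F}) : is_Zloc p K -> GRing.subring_closed K.
Proof.
move=> Kloc; have memK := is_ZlocP Kloc.
split=> [|x y|x y].
- apply/memK; exists 1, 1; rewrite mulr1; split=> //.
  by rewrite dvdn1; apply: contraTN (prime_gt1 p_prime) => /eqP ->.
- move=> /memK [a1 [d1 [pNd1 E1]]] /memK [a2 [d2 [pNd2 E2]]]; apply/memK.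
  exists (a1 * d2 - a2 * d1), (d1 * d2); rewrite abszM Euclid_dvdM // negb_or pNd1.
  by split=> //; rewrite intrB !intrM -E1 -E2; ring.
- move=> /memK [a1 [d1 [pNd1 E1]]] /memK [a2 [d2 [pNd2 E2]]]; apply/memK.
  exists (a1 * a2), (d1 * d2); rewrite abszM Euclid_dvdM // negb_or pNd1.
  by split=> //; rewrite !intrM -E1 -E2; ring.
Qed.

Lemma is_Zloc_p_fraction_free (K : {pred F}) : is_Zloc p K -> p_fraction_free p K.
Proof.
move=> Kloc.
apply: (p_fraction_free_subring
          (S := HB.pack K (GRing.isSubringClosed.Build _ _ (is_Zloc_subring Kloc)))).
apply/negP => /(is_ZlocP Kloc) [a [d [pNd Ed]]]; apply: (negP pNd).
have -> : d = p%:Z * a.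
  by apply: intrF_inj; rewrite /= intrM -Ed -pmulrn mulrA divff ?natr_p_neq0 ?mul1r.
by rewrite abszM dvdn_mulr.
Qed.

End CoefficientRing.

Lemma dvdp_Xn_sub1 (R : idomainType) (n m : nat) :
  (n %| m)%N -> ('X^n - 1 : {poly R}) %| 'X^m - 1.
Proof. by case/dvdnP=> k ->; rewrite mulnC exprM (subrX1 'X^n) dvdp_mulIl. Qed.

Lemma horner1_dvdp_Xn_sub1 (R : idomainType) (n : nat) (q : {poly R}) :
  ('X^n - 1) %| q -> q.[1] = 0.
Proof.
move/root_dvdp=> /(_ 1); rewrite /root !hornerE expr1n subrr eqxx => /(_ isT).
by move/eqP.
Qed.

Lemma horner1_sumXn (R : comNzRingType) (m : nat) (f : nat -> nat) :
  (\sum_(i < m) 'X^(f i) : {poly R}).[1] = m%:R.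
Proof.
rewrite horner_sum; under eq_bigr do rewrite hornerXn expr1n.
by rewrite sumr_const card_ord.
Qed.

Lemma dvdp_sumXn_sub (R : idomainType) (n m : nat) (f : nat -> nat) :
  (forall i, n %| f i)%N -> ('X^n - 1 : {poly R}) %| \sum_(i < m) 'X^(f i) - m%:R.
Proof.
move=> n_dvd_f; rewrite -[m in m%:R]card_ord -sumr_const -sumrB.
apply: (big_ind (fun q : {poly R} => ('X^n - 1) %| q)) => [|a b|i _].
- exact: dvdp0.
- exact: dvdp_add.
- exact: dvdp_Xn_sub1.
Qed.

Lemma polyOver_divXn_sub1 (R : nzRingType) (S : subringClosed R) (n : nat)
    (g : {poly R}) :
  (0 < n)%N -> g * ('X^n - 1) \is a polyOver S -> g \is a polyOver S.
Proof.
move=> n_gt0 /polyOverP hS; apply/polyOverP => i; elim/ltn_ind: i => i IHi.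
have -> : g`_i = (g * 'X^n)`_i - (g * ('X^n - 1))`_i.
  by rewrite mulrBr mulr1 coefB opprB addrC subrK.
rewrite coefMXn rpredB //; case: ltnP => [_|n_le_i]; first exact: rpred0.
by apply: IHi; rewrite ltn_subrL n_gt0 (leq_trans n_gt0).
Qed.

Lemma coef_XaddC1_exp (R : nzRingType) (n i : nat) :
  (('X + 1 : {poly R}) ^+ n)`_i = 'C(n, i)%:R.
Proof.
elim: n i => [|n IHn] [|i]; rewrite ?expr0 ?coef1 // exprSr mulrDr mulr1 coefD coefMX /=.
  by rewrite !IHn add0r !bin0.
by rewrite !IHn binS natrD addrC.
Qed.

(* The coefficients 'C(p, i) of (X + 1)^p, 0 < i < p, are divisible by p. *)
Definition binomial_quotient (R : nzRingType) (p : nat) : {poly R} :=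
  \poly_(i < p) ('C(p, i) %/ p)%:R.

Lemma exprXaddC1_prime (R : nzRingType) (p : nat) : prime p ->
  ('X + 1 : {poly R}) ^+ p - 1 = 'X^p + binomial_quotient R p *+ p.
Proof.
move=> p_prime; apply/polyP => i.
rewrite coefB coef_XaddC1_exp coefD coefXn coefMn coef_poly coef1.
case: (ltngtP i p) => [i_lt_p|p_lt_i|->].
- case: i i_lt_p => [|i] i_lt_p.
    by rewrite bin0 divn_small ?prime_gt1 // subrr mul0rn addr0.
  by rewrite subr0 add0r -mulrnA divnK // prime_dvd_bin.
- rewrite bin_small // !gtn_eqF // ?(leq_ltn_trans _ p_lt_i) //.
  by rewrite subr0 mul0rn addr0.
- by rewrite binn gtn_eqF ?prime_gt0 // subr0 mul0rn addr0.
Qed.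

Lemma polyOver_binomial_quotient (R : nzRingType) (S : subringClosed R) (p : nat) :
  binomial_quotient R p \is a polyOver S.
Proof. by apply/polyOver_poly => i _; apply: rpred_nat. Qed.

Definition geomX (R : nzRingType) (k m : nat) : {poly R} := \sum_(i < m) 'X^(k * i).

Lemma geomX0 (R : nzRingType) (m : nat) : geomX R 0 m = m%:R.
Proof.
by rewrite /geomX; under eq_bigr do rewrite mul0n expr0; rewrite sumr_const card_ord.
Qed.

Lemma geomXS (R : nzRingType) (k m : nat) : geomX R k m.+1 = 'X^k * geomX R k m + 1.
Proof.
rewrite /geomX big_ord_recl muln0 expr0 addrC mulr_sumr; congr (_ + _).
by apply: eq_bigr => i _; rewrite /= mulnS exprD.
Qed.

Lemma cpowE (F : fieldType) (p k : nat) (x : {poly F} * {poly F}) (m : nat) :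
  cpow p (k, x) m =
    ((m * k) %% p ^ 2, (red p (geomX F k m * x.1), red p (geomX F k m * x.2)))%N.
Proof.
elim: m => [|m IHm]; first by rewrite /cpow /geomX big_ord0 /red !mul0r mod0p mod0n.
rewrite /cpow iterS -/(cpow p (k, x) m) IHm /cmul /= geomXS.
congr (_, (_, _)); first by rewrite modnDml mulSn addnC.
  by rewrite /red modpD modp_mul -modpD mulrDl mul1r mulrA.
by rewrite /red modpD modp_mul -modpD mulrDl mul1r mulrA.
Qed.

Lemma red_eq_dvdp (F : fieldType) (p : nat) (a b : {poly F}) :
  red p a = red p b -> modp2 F p %| a - b.
Proof. by rewrite /red => Eab; apply/modp_eq0P; rewrite modpD modpN Eab subrr. Qed.

Section TorsionFree.

Variables (F : fieldType) (p j : nat) (S : subringClosed F).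
Hypotheses (p_prime : prime p) (F_char0 : [pchar F] =i pred0).
Hypotheses (S_p_fraction_free : p_fraction_free p S) (j_lt_p : (j < p)%N).

Let p_neq0 : p%:R != 0 :> F := natr_p_neq0 p_prime F_char0.

Lemma red_natr_mul_eq0 (n : nat) (y : {poly F}) :
  n%:R != 0 :> F -> reduced p y -> red p (n%:R * y) = 0 -> y = 0.
Proof.
move=> n_neq0 y_red; rewrite /red mulr_natl -scaler_nat modp_small.
  by move/eqP; rewrite scaler_eq0 (negbTE n_neq0) => /eqP.
by rewrite size_scale // /modp2 -polyC1 size_XnsubC ?expn_gt0 ?prime_gt0 // ltnW.
Qed.

Lemma crys_horner1 (k : nat) (x : {poly F} * {poly F}) (c1 c2 : {poly F}) :
  x.1.[1] = 0 ->
  red p (x - pmul (Nk F k) (wj F p)).1 =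
    red p (c1 * (gen1 F p j).1 + c2 * (gen2 F p).1) ->
  c1.[1] * p%:R = - k%:R.
Proof.
move=> x1_1 /red_eq_dvdp /horner1_dvdp_Xn_sub1 /eqP E.
have PhiA1 : (PhiA F p).[1] = p%:R := horner1_sumXn F p (fun i => i).
have PhiAp1 : (PhiAp F p).[1] = p%:R := horner1_sumXn F p (fun i => p * i)%N.
have Nk1 : (Nk F k).[1] = k%:R := horner1_sumXn F k (fun i => i).
rewrite /= !hornerE PhiA1 PhiAp1 Nk1 x1_1 subrr expr0n /= in E.
apply/eqP; rewrite -subr_eq0 -oppr_eq0 -(eqP E); apply/eqP.
by field; apply: p_neq0.
Qed.

Lemma Xp_sub1_ndvd (u : nat) (c1 c2 : {poly F}) :
  c1 \is a polyOver S -> c2 \is a polyOver S -> ~~ (p %| u)%N -> c1.[1] = - u%:R ->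
  ~~ (('X^p - 1) %| c1 * ('X - 1) ^+ j + c2 * p%:R).
Proof.
move=> c1S c2S pNu c1_1; apply/negP => /divpK; set g := _ %/ _ => Eg.
have gS : g \is a polyOver S.
  apply: (polyOver_divXn_sub1 (prime_gt0 p_prime)); rewrite Eg.
  by rewrite rpredD ?rpredM ?rpredX ?rpredB ?polyOverX ?rpred1 ?rpred_nat.
pose T : {poly F} := 'X + 1.
have TS : T \is a polyOver S by rewrite rpredD ?polyOverX ?rpred1.
have := congr1 (fun q => (q \Po T)`_j) Eg => /=.
rewrite !(rmorphB, rmorphD, rmorphM, rmorphXn, rmorph1, rmorph_nat) /= comp_polyX addrK.
rewrite exprXaddC1_prime // mulrDr !coefD !coefMXn ltnn subnn j_lt_p add0r.
rewrite -horner_coef0 horner_comp !hornerE c1_1 => E.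
rewrite !mulrnAr !coefMn mulr1 in E.
apply/negP: (S_p_fraction_free pNu).
have -> : u%:R / p%:R = (c2 \Po T)`_j - ((g \Po T) * binomial_quotient F p)`_j.
  by apply: (mulIf p_neq0); rewrite divfK // mulrBl !mulr_natr E; ring.
rewrite rpredB //; apply/polyOverP; first exact: polyOver_comp.
by rewrite rpredM ?polyOver_comp ?polyOver_binomial_quotient.
Qed.

Lemma crys_Xp_sub1_dvd (u n : nat) (x : {poly F} * {poly F}) (c1 c2 : {poly F}) :
  n%:R != 0 :> F -> modp2 F p %| geomX F (u * p) n * x.2 ->
  red p (x - pmul (Nk F (u * p)) (wj F p)).2 =
    red p (c1 * (gen1 F p j).2 + c2 * (gen2 F p).2) ->
  ('X^p - 1) %| c1 * ('X - 1) ^+ j + c2 * p%:R.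
Proof.
move=> n_neq0 x2_tors /red_eq_dvdp; rewrite /= mulr0 subr0.
have Xp_dvd_modp2 : ('X^p - 1) %| modp2 F p by apply: dvdp_Xn_sub1; rewrite dvdn_exp.
have geomX_n : ('X^p - 1) %| geomX F (u * p) n - n%:R.
  by apply: dvdp_sumXn_sub => i; rewrite mulnAC dvdn_mull.
have x2_dvd : ('X^p - 1) %| x.2.
  rewrite -(dvdpZr _ _ n_neq0) scaler_nat -mulr_natl.
  have -> : n%:R * x.2 =
      geomX F (u * p) n * x.2 - (geomX F (u * p) n - n%:R) * x.2 by ring.
  by rewrite dvdp_sub ?(dvdp_trans Xp_dvd_modp2 x2_tors) ?dvdp_mulr.
move=> /(dvdp_trans Xp_dvd_modp2); rewrite dvdp_subr // => PhiAp_dvd.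
have -> : c1 * ('X - 1) ^+ j + c2 * p%:R =
    c1 * ('X - 1) ^+ j + c2 * PhiAp F p - c2 * (PhiAp F p - p%:R) by ring.
by rewrite dvdp_sub ?dvdp_mull ?dvdp_sumXn_sub // => i; apply: dvdn_mulr.
Qed.

Lemma crys_torsion_free_subring : crys_torsion_free p j S.
Proof.
move=> [k x] [/= k_lt r1 r2 _ [c1 [c2 [c1S c2S E1 E2]]]] n n_gt0.
rewrite cpowE /cone => -[_ x1_tors x2_tors].
have n_neq0 : n%:R != 0 :> F by rewrite natrF_eq0 // -lt0n.
have [k0 | k_gt0] := posnP k.
  rewrite k0 geomX0 in x1_tors x2_tors.
  rewrite k0 [x]surjective_pairing (red_natr_mul_eq0 n_neq0 r1 x1_tors).
  by rewrite (red_natr_mul_eq0 n_neq0 r2 x2_tors).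
exfalso.
have x1_1 : x.1.[1] = 0.
  have /modp_eq0P/horner1_dvdp_Xn_sub1 := x1_tors.
  by rewrite hornerM horner1_sumXn => /eqP; rewrite mulf_eq0 (negbTE n_neq0) => /eqP.
have c1_1 := crys_horner1 x1_1 E1.
have /dvdnP [u k_up] : (p %| k)%N.
  apply/negPn/negP => pNk; apply: (negP (S_p_fraction_free pNk)).
  have -> : k%:R / p%:R = - c1.[1] by rewrite -[k%:R]opprK -c1_1 mulNr mulfK.
  by rewrite rpredN rpred_horner ?rpred1.
have pNu : ~~ (p %| u)%N.
  have p_gt0 := prime_gt0 p_prime.
  move: k_gt0 k_lt; rewrite k_up muln_gt0 p_gt0 andbT -mulnn ltn_pmul2r //.
  by move=> u_gt0 u_lt_p; rewrite gtnNdvd.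
apply: (negP (Xp_sub1_ndvd c1S c2S pNu _)).
  by apply: (mulIf p_neq0); rewrite c1_1 k_up natrM mulNr.
rewrite k_up in x2_tors E2.
by apply: (crys_Xp_sub1_dvd n_neq0 _ E2); apply/modp_eq0P.
Qed.

End TorsionFree.

Unset Implicit Arguments.

Theorem lemma10 (p : nat) (F : fieldType) (K : {pred F}) (j : nat) :
  prime p -> (2 < p)%N ->
  [pchar F] =i pred0 ->
  (is_Zloc p K \/ is_Zp p K) ->
  (1 <= j)%N -> (j <= p - 2)%N ->
  crys_torsion_free p j K.
Proof.
move=> p_prime _ F_char0 K_Zloc_or_Zp _ j_le.
have j_lt_p : (j < p)%N.
  by apply: leq_ltn_trans j_le _; rewrite ltn_subrL (prime_gt0 p_prime).
have [K_subring K_p_fraction_free] : GRing.subring_closed K /\ p_fraction_free p K.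
  case: K_Zloc_or_Zp => KZ; split.
  - exact: (is_Zloc_subring p_prime F_char0 KZ).
  - exact: (is_Zloc_p_fraction_free p_prime F_char0 KZ).
  - exact: (is_Zp_subring KZ).
  - exact: (is_Zp_p_fraction_free p_prime F_char0 KZ).
exact: (crys_torsion_free_subring
          (S := HB.pack K (GRing.isSubringClosed.Build _ _ K_subring))
          p_prime F_char0 K_p_fraction_free j_lt_p).
Qed.
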